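(* Let $R$ be a ring with multiplicative identity $1$, and let $(A, C, U)$ be a Frobenius template in $R$ such that $1 \in U$. If $(\alpha_1, \dots, \alpha_n)$ is a list in $A$ such that $\mathrm{Frob}(\alpha_1, \dots, \alpha_n) \neq \emptyset$, then $(\alpha_1, \dots, \alpha_n)$ spans unity in $R$, i.e. there exist $\lambda_1, \dots, \lambda_n \in R$ with $1 = \lambda_1\alpha_1 + \dots + \lambda_n\alpha_n$.
   Context: An additive monoid in a ring $R$ is a subset of $R$ closed under addition and containing $0$. A Frobenius template in $R$ is a triple $(A, C, U)$ such that $A$ is a nonempty subset of $R$, $C$ and $U$ are additive monoids in $R$, and for every list (finite sequence) $(\alpha_1, \dots, \alpha_n)$ of elements of $A$, the set $MN(\alpha_1, \dots, \alpha_n) = \{\sum_{i=1}^n \lambda_i \alpha_i : \lambda_1, \dots, \lambda_n \in C\}$ is a subset of $U$. The Frobenius set of such a list is $\mathrm{Frob}(\alpha_1, \dots, \alpha_n) = \{w \in R : w + U \subseteq MN(\alpha_1, \dots, \alpha_n)\}$, where $w + U = \{w + u : u \in U\}$. *)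

From mathcomp Require Import all_boot all_algebra.
Set Implicit Arguments. Unset Strict Implicit. Unset Printing Implicit Defensive.
Import GRing.Theory.
Local Open Scope ring_scope.

Definition additive_monoid (R : pzRingType) (M : R -> Prop) : Prop :=
  M 0 /\ (forall x y, M x -> M y -> M (x + y)).

Definition list_in (R : pzRingType) (A : R -> Prop) (al : seq R) : Prop :=
  forall i : 'I_(size al), A al`_i.

Definition MN (R : pzRingType) (C : R -> Prop) (al : seq R) (x : R) : Prop :=
  exists la : 'I_(size al) -> R,
    (forall i, C (la i)) /\ x = \sum_(i < size al) la i * al`_i.

Definition frobenius_template (R : pzRingType) (A C U : R -> Prop) : Prop :=
  (exists a, A a) /\ additive_monoid C /\ additive_monoid U /\
  (forall al : seq R, list_in A al -> forall x, MN C al x -> U x).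

Definition Frob (R : pzRingType) (C U : R -> Prop) (al : seq R) (w : R) : Prop :=
  forall u, U u -> MN C al (w + u).

From mathcomp Require Import all_boot all_algebra.
Local Open Scope ring_scope.
Import GRing.Theory.

Lemma MN_subr_span {R : pzRingType} {C : R -> Prop} {al : seq R} {x y : R} :
  MN C al x -> MN C al y ->
  exists la : 'I_(size al) -> R, y - x = \sum_(i < size al) la i * al`_i.
Proof.
move=> [lx [_ ->]] [ly [_ ->]].
exists (fun i => ly i - lx i).
by rewrite -sumrB; apply: eq_bigr => i _; rewrite mulrBl.
Qed.

Theorem proposition2p1 (R : pzRingType) (A C U : R -> Prop)
  (hT : frobenius_template A C U) (h1 : U 1)
  (al : seq R) (hal : list_in A al) (hF : exists w, Frob C U al w) :
  exists la : 'I_(size al) -> R, 1 = \sum_(i < size al) la i * al`_i.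
Proof.
have [_ [_ [[U0 _] _]]] := hT.
have [w hw] := hF.
(* Both [w + 0] and [w + 1] lie in MN(al), and their difference is 1. *)
have [la diff_eq] := MN_subr_span (hw 0 U0) (hw 1 h1).
by exists la; rewrite -diff_eq addrC addr0 addKr.
Qed.
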